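(* The set $\mathscr U_k:=\{\underline A\in\mathcal C_k(d):\Theta_k(\underline A)>0\}$ is open and dense in $\mathcal C_k(d)$, where $\Theta_k(\underline A):=\min\{\|\wedge_k(A_aA_b)\|:1\le a,b\le m\}$ for $\underline A=(A_1,\dots,A_m)$.
   Context: Fix integers $m,d\ge1$ and $1\le k\le d$. $\mathcal C_k(d)$ is the set of tuples $\underline A=(A_1,\dots,A_m)\in{\rm Mat}(d,\mathbb R)^m$ with $\mathrm{rank}(A_j)=k$ for all $j$, with the subspace topology from ${\rm Mat}(d,\mathbb R)^m\cong\mathbb R^{md^2}$. $\wedge_kA$ is the $k$-th exterior power of a matrix $A$ (the matrix of its $k\times k$ minors). *)

From mathcomp Require Import all_boot all_algebra.
From mathcomp Require Import all_classical all_reals all_analysis.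
Import numFieldNormedType.Exports.
Import GRing.Theory Num.Theory.
Set Implicit Arguments. Unset Strict Implicit. Unset Printing Implicit Defensive.
Local Open Scope ring_scope.
Local Open Scope classical_set_scope.

(* An m-tuple of d x d real matrices (A_1,...,A_m) is encoded as a row vector
   of matrices A : 'rV['M[R]_d]_m, with A_j = A ord0 j.  This type carries the
   product topology, i.e. the Euclidean topology of R^(m d^2). *)
Definition mtuple (R : realType) (m d : nat) := 'rV['M[R]_d]_m.

(* Index set of the k-th exterior power: the k-subsets of {0,...,d-1}, each
   represented by its increasing enumeration f : 'I_k -> 'I_d. *)
Definition incr_index (k d : nat) (f : {ffun 'I_k -> 'I_d}) : bool :=
  [forall i : 'I_k, forall j : 'I_k, (i < j)%N ==> (f i < f j)%N].

(* k-th exterior power of A: the matrix of its k x k minors, indexed by pairs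
   (I, J) of k-subsets (row subset I, column subset J); entries at indices
   that are not increasing enumerations are set to 0. *)
Definition wedge (R : realType) (k d : nat) (A : 'M[R]_d)
  : {ffun {ffun 'I_k -> 'I_d} * {ffun 'I_k -> 'I_d} -> R} :=
  [ffun p => if incr_index p.1 && incr_index p.2
             then \det (mxsub p.1 p.2 A) else 0].

Definition wnorm (R : realType) (k d : nat)
  (w : {ffun {ffun 'I_k -> 'I_d} * {ffun 'I_k -> 'I_d} -> R}) : R :=
  \big[Num.max/0]_p `|w p|.

(* Theta_k(A) = min { || wedge_k (A_a A_b) || : a, b in {1..m} }
   (for m >= 1; the initial value of the fold is one of the listed values). *)
Definition Theta (R : realType) (m d k : nat) (A : mtuple R m d) : R :=
  let s := [seq wnorm (wedge k (A ord0 a *m A ord0 b)) | a <- enum 'I_m, b <- enum 'I_m] in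
  \big[Num.min/head 0 s]_(x <- s) x.

Definition Ck (R : realType) (m d k : nat) : set (mtuple R m d) :=
  [set A | forall j : 'I_m, \rank (A ord0 j) = k].

Definition Uk (R : realType) (m d k : nat) : set (mtuple R m d) :=
  [set A | @Ck R m d k A /\ 0 < @Theta R m d k A].

Definition rel_open (T : topologicalType) (S U : set T) : Prop :=
  exists O : set T, open O /\ U = O `&` S.

Definition rel_dense (T : topologicalType) (S U : set T) : Prop :=
  U `<=` S /\
  forall O : set T, open O -> (O `&` S !=set0) -> (O `&` U !=set0).

(* The condition wedge_k(A_a A_b) <> 0 says that some k x k minor of A_a A_b
   is nonzero; minors are polynomials in the entries, so it is an open
   condition, and U_k is the trace on C_k(d) of finitely many open sets.
   Density is obtained one pair (a, b) at a time.  As rank A_a = rank A_b = k,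
   there is an invertible W with rank (A_a W A_b) = k.  Along the path
   A_a(t) = A_a (1 + t (W - 1)) the rank of A_a(t) stays k wherever
   det (1 + t (W - 1)) <> 0, and a suitable minor of A_a(t) A_b is nonzero at
   t = 1.  Both are polynomials in t that do not vanish identically, so
   arbitrarily small t avoid their roots; since the conditions already gained
   are open, they survive the later perturbations. *)

From mathcomp Require Import all_boot all_order all_algebra.
From mathcomp Require Import all_classical all_reals all_analysis.
Import numFieldNormedType.Exports.
Import Order.TTheory GRing.Theory Num.Theory.
Set Implicit Arguments.
Unset Strict Implicit.
Unset Printing Implicit Defensive.
Local Open Scope ring_scope.
Local Open Scope classical_set_scope.

Lemma incr_index_factor (k n : nat) (f : 'I_k -> 'I_n) : injective f ->
  exists2 g : {ffun 'I_k -> 'I_n}, incr_index g &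
    exists2 h : 'I_k -> 'I_k, injective h & f =1 g \o h.
Proof.
move=> f_inj; set S := [set f i | i in 'I_k]%SET.
have cardS : #|S| = k by rewrite card_imset ?card_ord.
pose g := [ffun i => Order.enum_val (cast_ord (esym cardS) i) : 'I_n].
have Sf i : f i \in S by apply: imset_f.
pose h i := cast_ord cardS (Order.enum_rank_in (Sf i) (f i)).
have fgh : f =1 g \o h by move=> i; rewrite /= ffunE cast_ordK Order.enum_rankK_in.
exists g; last by exists h => //; apply: (@inj_compr _ _ _ g); apply: eq_inj fgh.
apply/forallP => i; apply/forallP => j; apply/implyP => ij; rewrite !ffunE.
have := leW_mono (Order.le_enum_val (A := S) le_total)
  (cast_ord (esym cardS) i) (cast_ord (esym cardS) j).
by rewrite !ltEord /= => ->.
Qed.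

Section RankLemmas.
Variable F : fieldType.

Lemma mxrank_unitmxMl n p (L : 'M[F]_n) (X : 'M[F]_(n, p)) :
  L \in unitmx -> \rank (L *m X) = \rank X.
Proof. by move=> Lu; rewrite eqmxMfull ?row_full_unit. Qed.

Lemma exists_unitmx_mxrank_mul n (A B : 'M[F]_n) : \rank B = \rank A ->
  exists2 W, W \in unitmx & \rank (A *m W *m B) = \rank A.
Proof.
move=> rBA; set rA := row_ebase A; set cB := col_ebase B.
exists (invmx rA *m invmx cB).
  by rewrite unitmx_mul !unitmx_inv row_ebase_unit col_ebase_unit.
rewrite -{1}(mulmx_ebase A) -{1}(mulmx_ebase B) -/rA -/cB rBA !mulmxA.
rewrite mulmxK ?row_ebase_unit // mulmxKV ?col_ebase_unit //.
rewrite -!mulmxA mxrank_unitmxMl ?col_ebase_unit // mulmxA pid_mx_id ?rank_leq_row //.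
by rewrite mxrankMfree ?row_free_unit ?row_ebase_unit // rank_pid_mx ?rank_leq_row.
Qed.

Lemma exists_incr_rowsub_free (p n k : nat) (M : 'M[F]_(p, n)) : \rank M = k ->
  exists2 f : {ffun 'I_k -> 'I_p}, incr_index f & row_free (rowsub f M).
Proof.
move=> <-; have [g g_incr [h h_inj fgh]] := incr_index_factor (@maxrankfun_inj _ _ _ M).
exists g => //; rewrite /row_free -(eqmx_rowsub h h_inj (leqnn _) fgh).
exact: maxrowsub_free.
Qed.

Lemma exists_incr_minor_neq0 (p n k : nat) (M : 'M[F]_(p, n)) : \rank M = k ->
  exists f : {ffun 'I_k -> 'I_p}, exists g : {ffun 'I_k -> 'I_n},
    [/\ incr_index f, incr_index g & \det (mxsub f g M) != 0].
Proof.
move=> rM; have [f f_incr /eqnP rf] := exists_incr_rowsub_free rM.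
have rfT : \rank (rowsub f M)^T = k by rewrite mxrank_tr.
have [g g_incr gfree] := exists_incr_rowsub_free rfT.
exists f, g; split=> //.
have -> : mxsub f g M = (rowsub g (rowsub f M)^T)^T by apply/matrixP => i j; rewrite !mxE.
by rewrite det_tr -unitfE -unitmxE -row_free_unit.
Qed.

End RankLemmas.

Lemma entry_continuous (T : topologicalType) (m n : nat) (i : 'I_m) (j : 'I_n) :
  continuous (fun M : 'M[T]_(m, n) => M i j).
Proof.
move=> M Q /= MQ; exists (fun i' j' => if (i' == i) && (j' == j) then Q else setT).
  by move=> i' j'; case: ifP => [/andP[/eqP-> /eqP->] // | _]; exact: filterT.
by move=> N /(_ i j); rewrite !eqxx.
Qed.

Lemma continuous_entry (S T : topologicalType) (m n : nat) (f : S -> 'M[T]_(m, n))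
    (i : 'I_m) (j : 'I_n) :
  continuous f -> continuous (fun x => f x i j).
Proof.
move=> fc x; apply: (@continuous_comp _ _ _ f (fun M => M i j)).
  exact: fc.
exact: entry_continuous.
Qed.

Lemma continuous_mx (S T : topologicalType) (m n : nat) (f : S -> 'M[T]_(m, n)) :
  (forall i j, continuous (fun x => f x i j)) -> continuous f.
Proof.
move=> fc x Q [P Pnbhs PQ]; apply: filterS (fun y Py => PQ (f y) Py) _.
by apply: filter_forall => i; apply: filter_forall => j; exact: fc.
Qed.

Section ContinuousMatrixOps.
Variables (K : numFieldType) (T : topologicalType).

Lemma continuous_mulmx (p q r : nat) (M : T -> 'M[K]_(p, q)) (N : T -> 'M[K]_(q, r)) :
  continuous M -> continuous N -> continuous (fun x => M x *m N x).
Proof.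
move=> Mc Nc; apply: continuous_mx => i j.
under eq_fun do rewrite mxE.
apply: (continuous_big add_continuous) => l _ x.
by apply: cvgM; apply: continuous_entry.
Qed.

Lemma continuous_det (n : nat) (M : T -> 'M[K]_n) :
  continuous M -> continuous (fun x => \det (M x)).
Proof.
move=> Mc; apply: (continuous_big add_continuous) => s _ x; apply: cvgM.
  exact: cvg_cst.
apply: (continuous_big mul_continuous) => i _; exact: continuous_entry.
Qed.

Lemma continuous_mxsub (m n m' n' : nat) (f : 'I_m' -> 'I_m) (g : 'I_n' -> 'I_n)
    (M : T -> 'M[K]_(m, n)) :
  continuous M -> continuous (fun x => mxsub f g (M x)).
Proof.
move=> Mc; apply: continuous_mx => i j; under eq_fun do rewrite mxE.
exact: continuous_entry.
Qed.

End ContinuousMatrixOps.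

Lemma continuous_map_mx_horner (R : realType) (m n : nat) (B : 'M[{poly R}]_(m, n)) :
  continuous (fun t : R => map_mx (horner_eval t) B).
Proof.
apply: continuous_mx => i j; under eq_fun do rewrite mxE horner_evalE.
exact: continuous_horner.
Qed.

Lemma exists_nonroot_near (K : numFieldType) (p : {poly K}) (x e : K) :
  p != 0 -> 0 < e -> exists2 t, `|x - t| < e & ~~ root p t.
Proof.
move=> p0 e0; pose pts := [seq x + e / i.+2%:R | i <- iota 0 (size p)].
have pts_uniq : uniq pts.
  rewrite map_inj_uniq ?iota_uniq // => i j /addrI /(mulfI (lt0r_neq0 e0)) /invr_inj.
  by move/eqP; rewrite eqr_nat => /eqP [].
have /allPn [_ /mapP [i _ ->] pi] : ~~ all (root p) pts.
  apply/negP => /(max_poly_roots p0)/(_ pts_uniq).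
  by rewrite size_map size_iota ltnn.
exists (x + e / i.+2%:R) => //.
rewrite opprD addrA subrr add0r normrN ger0_norm ?divr_ge0 ?ltW //.
by rewrite ltr_pdivrMr ?ltr0n // ltr_pMr // ltr1n.
Qed.

Lemma map_mx_horner_polyC (R : comNzRingType) (t : R) (p q : nat) (M : 'M[R]_(p, q)) :
  map_mx (horner_eval t) (map_mx polyC M) = M.
Proof. by rewrite -map_mx_comp; apply: map_mx_id => x /=; rewrite horner_evalE hornerC. Qed.

Section Wedge.
Variable R : realType.

Definition wedge_neq0 (k d : nat) (M : 'M[R]_d) : Prop := exists p, wedge k M p != 0.

Lemma continuous_wedge (T : topologicalType) (k d : nat) (M : T -> 'M[R]_d) p :
  continuous M -> continuous (fun x => wedge k (M x) p).
Proof.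
move=> Mc; under eq_fun do rewrite ffunE.
case: (_ && _); last exact: cst_continuous.
by apply: continuous_det; apply: continuous_mxsub.
Qed.

Lemma open_wedge_neq0 (T : topologicalType) (k d : nat) (M : T -> 'M[R]_d) :
  continuous M -> open [set x | wedge_neq0 k (M x)].
Proof.
move=> Mc; rewrite openE => x [p wp].
have wx_nbhs : nbhs (wedge k (M x) p) [set y : R | y != 0].
  by apply: open_nbhs_nbhs; split=> //; exact: open_neq.
have : nbhs x [set y | wedge k (M y) p != 0].
  exact: (continuous_wedge (k := k) (p := p) Mc wx_nbhs).
by apply: filterS => y wy; exists p.
Qed.

Lemma wnorm_gt0 (k d : nat) (w : {ffun {ffun 'I_k -> 'I_d} * {ffun 'I_k -> 'I_d} -> R}) :
  0 < wnorm w <-> exists p, w p != 0.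
Proof.
split=> [w_gt0 | [p wp]]; last by apply: lt_le_trans (le_bigmax _ _ p); rewrite normr_gt0.
apply: contrapT => /forallNP w0; move: w_gt0; rewrite ltNge => /negP; apply.
by apply: bigmax_le => // p _; move/negP: (w0 p); rewrite negbK => /eqP->; rewrite normr0.
Qed.

Lemma Theta_gt0 (m d k : nat) (A : mtuple R m d) : (0 < m)%N ->
  0 < Theta k A <-> forall a b, 0 < wnorm (wedge k (A ord0 a *m A ord0 b)).
Proof.
rewrite /Theta => m_gt0; set s := [seq _ | a <- enum 'I_m, b <- enum 'I_m].
have s_mem a b : wnorm (wedge k (A ord0 a *m A ord0 b)) \in s.
  by apply: (allpairs_f (fun a b => wnorm (wedge k (A ord0 a *m A ord0 b)))); rewrite mem_enum.
split=> [Th_gt0 a b | all_gt0].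
  by apply: lt_le_trans Th_gt0 _; apply: ge_bigmin_seq.
have s_gt0 x : x \in s -> 0 < x.
  by case/allpairsP => -[a b] [_ _ ->]; exact: all_gt0.
rewrite big_seq_cond; apply: (big_ind (fun x => 0 < x)) => [||x /andP[/s_gt0 //]].
  apply: s_gt0; case: s s_mem => [|x s' _]; last exact: mem_head.
  by move/(_ (Ordinal m_gt0) (Ordinal m_gt0)).
by move=> x y x_gt0 y_gt0; rewrite lt_min x_gt0.
Qed.

Lemma Uk_wedge_neq0 (m d k : nat) (A : mtuple R m d) : (0 < m)%N ->
  Uk k A <-> Ck k A /\ forall a b, wedge_neq0 k (A ord0 a *m A ord0 b).
Proof.
move=> m_gt0; rewrite /Uk /= Theta_gt0 //.
by split=> -[CA nzA]; split=> // a b; [apply/wnorm_gt0 | apply/wnorm_gt0]; exact: nzA.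
Qed.

End Wedge.

Section Perturbation.
Variables (R : realType) (m d k : nat).
Local Notation tuple := (mtuple R m d).

Definition tuple_eval (t : R) (B : 'rV['M[{poly R}]_d]_m) : tuple :=
  map_mx (map_mx (horner_eval t)) B.

Lemma continuous_tuple_eval (B : 'rV['M[{poly R}]_d]_m) : continuous (tuple_eval ^~ B).
Proof.
apply: continuous_mx => i j; under eq_fun do rewrite mxE.
exact: continuous_map_mx_horner.
Qed.

Lemma tuple_eval_meets_open (B : 'rV['M[{poly R}]_d]_m) (P : {poly R}) (O : set tuple) :
  open O -> O (tuple_eval 0 B) -> P != 0 -> exists2 t, O (tuple_eval t B) & ~~ root P t.
Proof.
move=> oO OB0 P0.
have /nbhs_ballP [e e_gt0 eO] : nbhs (0 : R) (tuple_eval ^~ B @^-1` O).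
  by apply: continuous_tuple_eval; apply: open_nbhs_nbhs.
by have [t t0 Pt] := exists_nonroot_near 0 P0 e_gt0; exists t => //; apply: eO.
Qed.

Definition perturb (A : tuple) (a : 'I_m) (W : 'M[R]_d) : 'rV['M[{poly R}]_d]_m :=
  \row_j (map_mx polyC (A ord0 j) *m
          if j == a then 1%:M + 'X *: map_mx polyC (W - 1%:M) else 1%:M).

Lemma perturb_eval (A : tuple) a W t j :
  tuple_eval t (perturb A a W) ord0 j =
  A ord0 j *m if j == a then 1%:M + t *: (W - 1%:M) else 1%:M.
Proof.
rewrite !mxE map_mxM map_mx_horner_polyC; case: eqP => _; last by rewrite map_mx1.
by rewrite map_mxD map_mx1 map_mxZ map_mx_horner_polyC /= horner_evalE hornerX.
Qed.

Lemma exists_perturbation (A : tuple) (a b : 'I_m) : Ck k A ->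
  exists B, exists2 P : {poly R}, P != 0 &
    tuple_eval 0 B = A /\ forall t, ~~ root P t ->
      Ck k (tuple_eval t B) /\ wedge_neq0 k (tuple_eval t B ord0 a *m tuple_eval t B ord0 b).
Proof.
move=> CA; have [W Wu rAWB] := exists_unitmx_mxrank_mul (etrans (CA b) (esym (CA a))).
pose B := perturb A a W; pose V := 1%:M + 'X *: map_mx polyC (W - 1%:M).
have rB1 : \rank (tuple_eval 1 B ord0 a *m tuple_eval 1 B ord0 b) = k.
  rewrite !perturb_eval eqxx scale1r addrC subrK.
  case: eqP => _; last by rewrite mulmx1 rAWB CA.
  (* b = a: both factors are perturbed, and W is invertible *)
  by rewrite mulmxA mxrankMfree ?row_free_unit // rAWB CA.
have [f [g [f_incr g_incr minor1]]] := exists_incr_minor_neq0 rB1.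
pose Pm := \det (mxsub f g (B ord0 a *m B ord0 b)).
have PmE t : Pm.[t] = \det (mxsub f g (tuple_eval t B ord0 a *m tuple_eval t B ord0 b)).
  by rewrite -horner_evalE -det_map_mx map_mxsub map_mxM !mxE.
have PvE t : (\det V).[t] = \det (1%:M + t *: (W - 1%:M)).
  rewrite -horner_evalE -det_map_mx map_mxD map_mx1 map_mxZ map_mx_horner_polyC /=.
  by rewrite horner_evalE hornerX.
exists B, (Pm * \det V).
  rewrite mulf_neq0 //; first by apply: contraNneq minor1 => Pm0; rewrite -PmE Pm0 horner0.
  have : (\det V).[0] != 0 by rewrite PvE scale0r addr0 det1 oner_neq0.
  by apply: contraNneq => ->; rewrite horner0.
split=> [|t].
  by apply/matrixP => i j; rewrite ord1 perturb_eval scale0r addr0 if_same mulmx1.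
rewrite rootM negb_or => /andP [Pmt Pvt]; split.
  move=> j; rewrite perturb_eval; case: eqP => _; last by rewrite mulmx1 CA.
  by rewrite mxrankMfree ?CA // row_free_unit unitmxE unitfE -PvE.
by exists (f, g); rewrite ffunE /= f_incr g_incr -PmE.
Qed.

Lemma exists_wedge_neq0_near (A : tuple) (O : set tuple) (a b : 'I_m) :
  open O -> O A -> Ck k A ->
  exists A', [/\ O A', Ck k A' & wedge_neq0 k (A' ord0 a *m A' ord0 b)].
Proof.
move=> oO OA CA; have [B [P P0 [B0 BP]]] := exists_perturbation a b CA.
rewrite -B0 in OA; have [t OBt Pt] := tuple_eval_meets_open oO OA P0.
by exists (tuple_eval t B); have [] := BP t Pt.
Qed.

Lemma open_wedge_neq0_pair (a b : 'I_m) :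
  open [set A : tuple | wedge_neq0 k (A ord0 a *m A ord0 b)].
Proof. by apply: open_wedge_neq0; apply: continuous_mulmx; exact: entry_continuous. Qed.

Lemma open_wedge_neq0_pairs :
  open [set A : tuple | forall a b, wedge_neq0 k (A ord0 a *m A ord0 b)].
Proof.
rewrite openE => A nzA; rewrite /interior.
apply: (@filter_forall _ _ (fun a B => forall b, wedge_neq0 k (B ord0 a *m B ord0 b))
  (nbhs A) _) => a.
apply: filter_forall => b.
by apply: open_nbhs_nbhs; split; [exact: open_wedge_neq0_pair | exact: nzA].
Qed.

Lemma exists_wedge_neq0_pairs_near (s : seq ('I_m * 'I_m)) (A : tuple) (O : set tuple) :
  open O -> O A -> Ck k A ->
  exists A', [/\ O A', Ck k A' &
    forall ab, ab \in s -> wedge_neq0 k (A' ord0 ab.1 *m A' ord0 ab.2)].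
Proof.
elim: s A O => [|[a b] s IHs] A O oO OA CA; first by exists A.
have [A1 [OA1 CA1 nzA1]] := exists_wedge_neq0_near a b oO OA CA.
have [A2 [[OA2 nzA2] CA2 nzsA2]] :=
  IHs A1 _ (openI oO (open_wedge_neq0_pair (a := a) (b := b))) (conj OA1 nzA1) CA1.
exists A2; split=> // ab; rewrite inE => /predU1P [-> // | /nzsA2 //].
Qed.

End Perturbation.

Theorem proposition4p3 (R : realType) (m d k : nat) :
  (1 <= m)%N -> (1 <= d)%N -> (1 <= k)%N -> (k <= d)%N ->
  rel_open (@Ck R m d k) (@Uk R m d k) /\ rel_dense (@Ck R m d k) (@Uk R m d k).
Proof.
move=> m_gt0 _ _ _; split.
  exists [set A : mtuple R m d | forall a b, wedge_neq0 k (A ord0 a *m A ord0 b)].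
  split; first exact: open_wedge_neq0_pairs.
  by apply/seteqP; split=> A; rewrite /= Uk_wedge_neq0 // => -[].
split=> [A /Uk_wedge_neq0 [] // | O oO [A [OA CA]]].
have [A' [OA' CA' nzA']] :=
  exists_wedge_neq0_pairs_near (enum {: 'I_m * 'I_m}) oO OA CA.
exists A'; split=> //; apply/Uk_wedge_neq0 => //; split=> // a b.
by apply: (nzA' (a, b)); rewrite mem_enum.
Qed.
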